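(* Let $K\subset\mathbb{R}^n$ be compact and $f:K\to\mathbb{R}^m$ continuous. For any $\epsilon>0$ there exists $F:\mathbb{R}^n\to\mathbb{R}^m$ such that (1) $F$ is the feedforward function of a radial neural network with $N(f,K,\epsilon)$ hidden layers whose widths are all $\max(n,m)+1$, and (2) $|F(x)-f(x)|<\epsilon$ for all $x\in K$.
   Context: $N(f,K,\epsilon)$ is the minimal $N$ for which there exist $c_1,\dots,c_N\in K$, $r_1,\dots,r_N\in(0,1)$ with $K\subseteq\bigcup_iB_{r_i}(c_i)$ and $f(B_{r_i}(c_i)\cap K)\subseteq B_\epsilon(f(c_i))$ for all $i$, where $B_r(c)$ is the open ball. For $h:\mathbb{R}\to\mathbb{R}$ piecewise differentiable, the radial rescaling function $h^{(k)}:\mathbb{R}^k\to\mathbb{R}^k$ is $h^{(k)}(v)=h(|v|)v/|v|$ ($v\ne0$), $h^{(k)}(0)=0$. A radial neural network with widths $(n_0,\dots,n_L)$ has weights $W_i\in\mathbb{R}^{n_i\times n_{i-1}}$, biases $b_i\in\mathbb{R}^{n_i}$, radial rescaling functions $\rho_i$ on $\mathbb{R}^{n_i}$; hidden layers are $1,\dots,L-1$; feedforward function $F=F_L$, $F_0=\mathrm{id}$, $F_i(x)=\rho_i(W_iF_{i-1}(x)+b_i)$. *)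

From HB Require Import structures.
From mathcomp Require Import all_boot all_order all_algebra.
From mathcomp Require Import all_classical all_reals all_analysis.
Set Implicit Arguments. Unset Strict Implicit. Unset Printing Implicit Defensive.
Import Order.TTheory GRing.Theory Num.Theory.
Import numFieldNormedType.Exports.
Local Open Scope classical_set_scope.
Local Open Scope ring_scope.

Definition enorm (R : realType) (k : nat) (v : 'cV[R]_k) : R :=
  Num.sqrt (\sum_(i < k) (v i ord0) ^+ 2).

Definition eball (R : realType) (k : nat) (c : 'cV[R]_k) (r : R) : set 'cV[R]_k :=
  [set x | enorm (x - c) < r].

Definition admissible_cover (R : realType) (n m : nat)
  (f : 'cV[R]_n -> 'cV[R]_m) (K : set 'cV[R]_n) (eps : R) (N : nat) : Prop :=
  exists (c : 'I_N -> 'cV[R]_n) (r : 'I_N -> R),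
    (forall i, K (c i)) /\
    (forall i, 0 < r i < 1) /\
    (K `<=` \bigcup_(i in [set: 'I_N]) eball (c i) (r i)) /\
    (forall i, f @` (eball (c i) (r i) `&` K) `<=` eball (f (c i)) eps).

(* N(f,K,eps): the minimal N with an admissible cover (0 if none exists,
   which does not happen for compact K and continuous f). *)
Definition Ncover (R : realType) (n m : nat)
  (f : 'cV[R]_n -> 'cV[R]_m) (K : set 'cV[R]_n) (eps : R) : nat :=
  match pselect (exists N, `[< admissible_cover f K eps N >]) with
  | left h => ex_minn h
  | right _ => 0%N
  end.

Definition piecewise_differentiable (R : realType) (h : R -> R) : Prop :=
  exists s : seq R, forall x, x \notin s -> derivable h x 1.

Definition radial_rescaling (R : realType) (k : nat) (h : R -> R)
  (v : 'cV[R]_k) : 'cV[R]_k :=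
  if v == 0 then 0 else (h (enorm v) / enorm v) *: v.

(* Radial neural network from R^a to R^c: a list of layers
   (W_i, b_i, rho_i = h_i^(n_i)) with matching widths. *)
Inductive rnet (R : realType) : nat -> nat -> Type :=
| rnet_nil : forall k, rnet R k k
| rnet_cons : forall a b c (W : 'M[R]_(b, a)) (bias : 'cV[R]_b) (h : R -> R),
    piecewise_differentiable h -> rnet R b c -> rnet R a c.

Fixpoint feedforward (R : realType) a c (net : rnet R a c) : 'cV[R]_a -> 'cV[R]_c :=
  match net in rnet _ a c return 'cV[R]_a -> 'cV[R]_c with
  | rnet_nil _ => fun x => x
  | rnet_cons _ _ _ W bias h _ rest =>
      fun x => feedforward rest (radial_rescaling h (W *m x + bias))
  end.

Fixpoint depth (R : realType) a c (net : rnet R a c) : nat :=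
  match net with
  | rnet_nil _ => 0%N
  | rnet_cons _ _ _ _ _ _ _ rest => (depth rest).+1
  end.

Fixpoint widths (R : realType) a c (net : rnet R a c) : seq nat :=
  match net with
  | rnet_nil k => [:: k]
  | rnet_cons a _ _ _ _ _ _ rest => a :: widths rest
  end.

Definition hidden_widths (R : realType) a c (net : rnet R a c) : seq nat :=
  drop 1 (take (depth net) (widths net)).

From HB Require Import structures.
From mathcomp Require Import all_boot all_order all_algebra.
From mathcomp Require Import all_classical all_reals all_analysis.
From mathcomp Require Import lra.
Import Order.TTheory GRing.Theory Num.Theory.
Import numFieldNormedType.Exports.
Local Open Scope classical_set_scope.
Local Open Scope ring_scope.
Set Implicit Arguments. Unset Strict Implicit. Unset Printing Implicit Defensive.

(* Work in R^(p+1) with p = max(n, m) and number the balls of a minimal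
   admissible cover B_{r_0}(c_0), ..., B_{r_N}(c_N).  As long as x lies in
   none of the balls seen so far, hidden layer k holds (x - c_k, H), where H
   exceeds every |f(c_a) - f(c_b)|; its norm lies in [H, sqrt(r_k^2 + H^2))
   exactly when x is in B_{r_k}(c_k), and the radial rescaling that vanishes
   on this annulus and is the identity elsewhere then sends it to 0.  Once x
   has been found in ball j, layer k holds f(c_j) - f(c_k), of norm below H,
   which the rescalings leave alone.  The affine maps between layers replace
   c_k, f(c_k) by c_{k+1}, f(c_{k+1}) in both forms, and the last layer adds
   f(c_N).  So the network outputs f(c_j) for the first ball j containing x,
   and admissibility makes this eps-close to f(x). *)

Section EuclideanNorm.
Variable R : realType.

Definition sqnorm k (v : 'cV[R]_k) : R := \sum_(i < k) v i 0 ^+ 2.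

Lemma enormE k (v : 'cV[R]_k) : enorm v = Num.sqrt (sqnorm v).
Proof. by []. Qed.

Lemma sqnorm_ge0 k (v : 'cV[R]_k) : 0 <= sqnorm v.
Proof. by apply: sumr_ge0 => i _; rewrite sqr_ge0. Qed.

Lemma sqnormE k (v : 'cV[R]_k) : sqnorm v = (v^T *m v) 0 0.
Proof. by rewrite !mxE; apply: eq_bigr => i _; rewrite !mxE expr2. Qed.

Lemma sqnormZ k t (v : 'cV[R]_k) : sqnorm (t *: v) = t ^+ 2 * sqnorm v.
Proof. by rewrite mulr_sumr; apply: eq_bigr => i _; rewrite mxE exprMn. Qed.

Lemma sqnormD_orth k (a b : 'cV[R]_k) :
  a^T *m b = 0 -> sqnorm (a + b) = sqnorm a + sqnorm b.
Proof.
move=> ab0; have ba0 : b^T *m a = 0 by rewrite -[b^T *m a]trmxK trmx_mul trmxK ab0 trmx0.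
rewrite !sqnormE; have -> : (a + b)^T = a^T + b^T by exact: linearD.
by rewrite mulmxDl !mulmxDr ab0 ba0 addr0 add0r mxE.
Qed.

Lemma sqnorm_isometry d k (A : 'M[R]_(d, k)) (u : 'cV[R]_k) :
  A^T *m A = 1%:M -> sqnorm (A *m u) = sqnorm u.
Proof. by move=> AA; rewrite !sqnormE trmx_mul -mulmxA (mulmxA A^T) AA mul1mx. Qed.

Lemma enorm_eq0 k (v : 'cV[R]_k) : enorm v = 0 -> v = 0.
Proof.
move=> /eqP; rewrite enormE sqrtr_eq0 => sq_le0.
have sq0 : sqnorm v = 0 by apply/eqP; rewrite eq_le sq_le0 sqnorm_ge0.
apply/matrixP => i j; rewrite (ord1 j) mxE.
have /(_ i isT) := psumr_eq0P (fun i _ => sqr_ge0 (v i 0)) sq0.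
by move/eqP; rewrite sqrf_eq0 => /eqP.
Qed.

Lemma enorm_distC k (a b : 'cV[R]_k) : enorm (a - b) = enorm (b - a).
Proof. by rewrite -opprB enormE -scaleN1r sqnormZ sqrrN expr1n mul1r. Qed.

Lemma enorm_lt k (v : 'cV[R]_k) (t : R) : 0 < t -> (enorm v < t) = (sqnorm v < t ^+ 2).
Proof. by move=> t0; rewrite enormE -{1}(ger0_norm (ltW t0)) -sqrtr_sqr ltr_sqrt ?exprn_gt0. Qed.

Lemma norm_entry_le_enorm k (v : 'cV[R]_k) i : `|v i 0| <= enorm v.
Proof.
rewrite enormE -sqrtr_sqr ler_sqrt ?sqnorm_ge0 // /sqnorm (bigD1 i) //= lerDl.
by apply: sumr_ge0 => j _; rewrite sqr_ge0.
Qed.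

Lemma enorm_lt_entrywise k (v : 'cV[R]_k) (r : R) : 0 < r ->
  (forall i, `|v i 0| < r / k.+1%:R) -> enorm v < r.
Proof.
move=> r0 small; set s := r / k.+1%:R.
have s0 : 0 < s by rewrite divr_gt0.
have sq_le : sqnorm v <= k%:R * s ^+ 2.
  rewrite -[k in k%:R]card_ord mulr_natl -sumr_const; apply: ler_sum => i _.
  by rewrite -real_normK ?num_real // lerXn2r ?nnegrE ?normr_ge0 ?(ltW s0) // ltW.
rewrite enorm_lt //; apply: le_lt_trans sq_le _.
have -> : r = s * (k%:R + 1) by rewrite natr1 /s mulfVK.
have k0 : 0 <= k%:R :> R by [].
nra.
Qed.

End EuclideanNorm.

Section Embeddings.
Variable R : realType.

Definition e_last p : 'cV[R]_p.+1 := delta_mx ord_max 0.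

Lemma tr_pid_mx_mul d k : (k <= d)%N ->
  (pid_mx k : 'M[R]_(d, k))^T *m pid_mx k = 1%:M.
Proof. by move=> kd; rewrite tr_pid_mx mul_pid_mx minnn (minn_idPr kd) pid_mx_1. Qed.

Lemma tr_e_last_mul p : (e_last p)^T *m e_last p = 1%:M.
Proof. by rewrite trmx_delta mul_delta_mx; apply/matrixP => a b; rewrite !ord1 !mxE. Qed.

Lemma sqnorm_e_last p : sqnorm (e_last p) = 1.
Proof. by rewrite sqnormE tr_e_last_mul mxE. Qed.

Lemma tr_pid_mx_mul_e_last p k : (k <= p)%N ->
  (pid_mx k : 'M[R]_(p.+1, k))^T *m e_last p = 0.
Proof.
move=> kp; rewrite -colE; apply/matrixP => a b; rewrite !mxE.
by rewrite /= ltnNge (leq_trans kp) ?andbF.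
Qed.

Lemma tr_e_last_mul_pid_mx p k (u : 'cV[R]_k) : (k <= p)%N ->
  (e_last p)^T *m (pid_mx k *m u) = 0.
Proof.
move=> kp; rewrite mulmxA -[_ *m pid_mx k]trmxK trmx_mul trmxK.
by rewrite tr_pid_mx_mul_e_last // trmx0 mul0mx.
Qed.

Lemma sqnorm_pid_mx_mul d k (u : 'cV[R]_k) : (k <= d)%N ->
  sqnorm (pid_mx k *m u : 'cV[R]_d) = sqnorm u.
Proof. by move=> kd; apply/sqnorm_isometry/tr_pid_mx_mul. Qed.

Lemma sqnorm_lift p k (u : 'cV[R]_k) (t : R) : (k <= p)%N ->
  sqnorm (pid_mx k *m u + t *: e_last p) = sqnorm u + t ^+ 2.
Proof.
move=> kp; rewrite sqnormD_orth; last first.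
  by rewrite trmx_mul -mulmxA -scalemxAr tr_pid_mx_mul_e_last // scaler0 mulmx0.
by rewrite sqnorm_pid_mx_mul ?(leq_trans kp) // sqnormZ sqnorm_e_last mulr1.
Qed.

End Embeddings.

Arguments e_last {R} p.

Section RadialRescaling.
Variable R : realType.

Definition annulus_cut (a b t : R) : R := if a <= t < b then 0 else t.

Lemma radial_rescaling_fix k (h : R -> R) (v : 'cV[R]_k) :
  h (enorm v) = enorm v -> radial_rescaling h v = v.
Proof.
move=> hv; rewrite /radial_rescaling; case: eqP => [-> // | /eqP v0].
have e0 : enorm v != 0 by apply: contra v0 => /eqP/enorm_eq0 ->.
by rewrite hv divff // scale1r.
Qed.

Lemma radial_annulus_cut k a b (v : 'cV[R]_k) :
  radial_rescaling (annulus_cut a b) v = if a <= enorm v < b then 0 else v.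
Proof.
case: ifP => vab; last by apply: radial_rescaling_fix; rewrite /annulus_cut vab.
by rewrite /radial_rescaling /annulus_cut vab mul0r scale0r if_same.
Qed.

Lemma piecewise_differentiable_id : piecewise_differentiable (@id R).
Proof. by exists [::] => x _; exact: derivable_id. Qed.

Lemma piecewise_differentiable_annulus_cut a b :
  piecewise_differentiable (annulus_cut a b).
Proof.
exists [:: a; b] => x; rewrite !inE negb_or => /andP[xa xb].
case: (ltgtP x a) => [xlta | altx | xea]; last by rewrite xea eqxx in xa.
  apply: (near_eq_derivable (f := id)); last exact: derivable_id.
  have xin : x \in `]-oo, a[ by rewrite in_itv /=.
  apply: filterS (near_in_itvNyo xin) => y; rewrite in_itv /= => ya.
  by rewrite /annulus_cut leNgt ya.
case: (ltgtP x b) => [xltb | bltx | xeb]; last by rewrite xeb eqxx in xb.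
  apply: (near_eq_derivable (f := cst 0)); last exact: derivable_cst.
  have xin : x \in `]a, b[ by rewrite in_itv /= altx xltb.
  apply: filterS (near_in_itvoo xin) => y; rewrite in_itv /= => /andP[ay yb].
  by rewrite /annulus_cut (ltW ay) yb.
apply: (near_eq_derivable (f := id)); last exact: derivable_id.
have xin : x \in `]b, +oo[ by rewrite in_itv /= bltx.
apply: filterS (near_in_itvoy xin) => y; rewrite in_itv /= andbT => bly.
by rewrite /annulus_cut ltNge (ltW bly) andbF.
Qed.

End RadialRescaling.

Section LookupNetwork.
Variables (R : realType) (n m p N : nat).
Hypotheses (n_le_p : (n <= p)%N) (m_le_p : (m <= p)%N).
Variables (c : nat -> 'cV[R]_n) (r : nat -> R) (v : nat -> 'cV[R]_m) (H : R).
Hypothesis H_gt0 : 0 < H.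
Hypothesis r_gt0 : forall k, 0 < r k.
Hypothesis v_dist_lt : forall a b, enorm (v a - v b) < H.

Definition in_ball k (x : 'cV[R]_n) : bool := enorm (x - c k) < r k.

Inductive phase := Searching of 'cV[R]_n | Found of nat.

Definition encode k s : 'cV[R]_p.+1 :=
  match s with
  | Searching x => pid_mx n *m (x - c k) + H *: e_last p
  | Found j => pid_mx m *m (v j - v k)
  end.

Definition probe k s :=
  if s is Searching x then (if in_ball k x then Found k else s) else s.

Fixpoint probes k cnt s :=
  if cnt is cnt'.+1 then probes k.+1 cnt' (probe k s) else s.

Definition cut_radius k := Num.sqrt (r k ^+ 2 + H ^+ 2).

Lemma radial_encode k s :
  radial_rescaling (annulus_cut H (cut_radius k)) (encode k s) =
  encode k (probe k s).
Proof.
rewrite radial_annulus_cut; case: s => [x|j] /=.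
  have -> : (H <= enorm (encode k (Searching x)) < cut_radius k) = in_ball k x.
    rewrite enormE sqnorm_lift // -{1}(ger0_norm (ltW H_gt0)) -sqrtr_sqr.
    rewrite ler_sqrt ?addr_ge0 ?sqnorm_ge0 ?sqr_ge0 // lerDr sqnorm_ge0 /=.
    by rewrite ltr_sqrt ?ltrD2r /in_ball ?enorm_lt // addr_gt0 ?exprn_gt0.
  by case: ifP => //= _; rewrite subrr mulmx0.
rewrite enormE sqnorm_pid_mx_mul ?(leq_trans m_le_p) // -enormE.
by rewrite leNgt v_dist_lt.
Qed.

(* (e_last p)^T reads off the constant coordinate H of a searching state and
   kills found states, so the rank-one term trades the shift of values made
   by the bias for a shift of centres on searching states only. *)
Definition shift_mx k : 'M[R]_p.+1 :=
  1%:M + H^-1 *: ((pid_mx n *m (c k - c k.+1) - pid_mx m *m (v k - v k.+1))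
                   *m (e_last p)^T).

Definition shift_bias k : 'cV[R]_p.+1 := pid_mx m *m (v k - v k.+1).

Lemma shift_encode k s : shift_mx k *m encode k s + shift_bias k = encode k.+1 s.
Proof.
rewrite /shift_mx /shift_bias [(1%:M + _) *m _]mulmxDl mul1mx -scalemxAl -mulmxA.
case: s => [x|j] /=; last first.
  by rewrite tr_e_last_mul_pid_mx // mulmx0 scaler0 addr0 -mulmxDr addrA subrK.
rewrite mulmxDr tr_e_last_mul_pid_mx // add0r -scalemxAr tr_e_last_mul.
rewrite -scalemxAr mulmx1 scalerA mulVf ?gt_eqF // scale1r addrA subrK.
by rewrite addrAC -mulmxDr addrA subrK.
Qed.

Definition readout_mx : 'M[R]_(m, p.+1) := (pid_mx m : 'M[R]_(p.+1, m))^T.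

Lemma readout_Found j : readout_mx *m encode N (Found j) + v N = v j.
Proof.
by rewrite /readout_mx /= mulmxA tr_pid_mx_mul ?(leq_trans m_le_p) // mul1mx subrK.
Qed.

Fixpoint tail_net k cnt : rnet R p.+1 m :=
  if cnt is cnt'.+1 then
    rnet_cons (shift_mx k) (shift_bias k)
      (piecewise_differentiable_annulus_cut H (cut_radius k.+1))
      (tail_net k.+1 cnt')
  else rnet_cons readout_mx (v N) (@piecewise_differentiable_id R) (rnet_nil R m).

Lemma feedforward_tail_net cnt k s :
  feedforward (tail_net k cnt) (encode k s) =
  readout_mx *m encode (k + cnt) (probes k.+1 cnt s) + v N.
Proof.
elim: cnt k s => [|cnt IH] k s /=; first by rewrite addn0 radial_rescaling_fix.
by rewrite shift_encode radial_encode IH addSnnS.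
Qed.

Definition input_bias : 'cV[R]_p.+1 := H *: e_last p - pid_mx n *m c 0.

Definition lookup_net : rnet R n m :=
  rnet_cons (pid_mx n) input_bias
    (piecewise_differentiable_annulus_cut H (cut_radius 0)) (tail_net 0 N).

Lemma feedforward_lookup_net x :
  feedforward lookup_net x =
  readout_mx *m encode N (probes 0 N.+1 (Searching x)) + v N.
Proof.
rewrite /=; have -> : pid_mx n *m x + input_bias = encode 0 (Searching x).
  by rewrite /= mulmxBr addrA addrAC.
by rewrite radial_encode feedforward_tail_net.
Qed.

Lemma depth_lookup_net : depth lookup_net = N.+2.
Proof. by rewrite /=; elim: N 0%N => [|cnt IH] k //=; rewrite IH. Qed.

Lemma hidden_widths_lookup_net : hidden_widths lookup_net = nseq N.+1 p.+1.
Proof.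
have widths_tail k cnt : widths (tail_net k cnt) = nseq cnt.+1 p.+1 ++ [:: m].
  by elim: cnt k => [|cnt IH] k //=; rewrite IH.
rewrite /hidden_widths depth_lookup_net /= widths_tail /=.
by rewrite -/(nseq N.+1 p.+1) take_size_cat ?size_nseq // drop0.
Qed.

Lemma probes_Found k cnt j : probes k cnt (Found j) = Found j.
Proof. by elim: cnt k => [|cnt IH] k //=. Qed.

Lemma probes_Searching cnt k i x : (k <= i < k + cnt)%N -> in_ball i x ->
  exists2 j, in_ball j x & probes k cnt (Searching x) = Found j.
Proof.
elim: cnt k => [|cnt IH] k /=; first by rewrite addn0 ltnNge => /andP[->].
case: ifPn => [xk _ _ | xk /andP[ki ilt] xi]; first by exists k; rewrite ?probes_Found.
have ik : i != k by apply: contraNneq xk => <-.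
by apply: IH xi; rewrite addSnnS ilt andbT ltn_neqAle eq_sym ik ki.
Qed.

Lemma lookup_net_correct i x : (i <= N)%N -> in_ball i x ->
  exists2 j, in_ball j x & feedforward lookup_net x = v j.
Proof.
move=> iN xi; have [|j xj probesE] := probes_Searching (k := 0) (cnt := N.+1) _ xi.
  by rewrite add0n ltnS iN.
by exists j; rewrite // feedforward_lookup_net probesE readout_Found.
Qed.

End LookupNetwork.

Section Covers.
Variables (R : realType) (n m : nat) (K : set 'cV[R]_n).
Variable f : 'cV[R]_n -> 'cV[R]_m.
Hypothesis f_cont : {within K, continuous f}.

Lemma within_continuous_enorm (eps : R) (c : 'cV[R]_n) : K c -> 0 < eps ->
  exists2 r : R, 0 < r < 1 &
    forall y, K y -> enorm (y - c) < r -> enorm (f y - f c) < eps.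
Proof.
move=> Kc eps_gt0.
have f_cvg : f @ within K (nbhs c) --> f c by move/subspace_continuousP: f_cont; apply.
have eps_nbhs : nbhs (f c) [set z | enorm (z - f c) < eps].
  apply/nbhs_ballP; exists (eps / m.+1%:R); first by rewrite /= divr_gt0.
  move=> z [_ fcz] /=; apply: enorm_lt_entrywise => // i.
  by rewrite !mxE distrC; exact: fcz.
have := f_cvg _ eps_nbhs; rewrite nbhs_simpl /= => /nbhs_ballP[d /= d_gt0 cd].
exists (Num.min d (1 / 2)).
  have [half_gt0 half_lt1] : 0 < 1 / 2 :> R /\ 1 / 2 < 1 :> R by split; lra.
  by rewrite lt_min d_gt0 half_gt0 gt_min half_lt1 orbT.
move=> y Ky cy; apply: cd => //; split => // i j; rewrite (ord1 j) /ball /= distrC.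
have := norm_entry_le_enorm (y - c) i; rewrite !mxE => yci.
by apply: le_lt_trans yci (lt_le_trans cy _); rewrite ge_min lexx.
Qed.

Lemma admissible_cover_exists eps : compact K -> 0 < eps ->
  exists N, admissible_cover f K eps N.
Proof.
move=> K_compact eps_gt0.
have radius c : exists r : R, K c -> (0 < r < 1) /\
    (forall y, K y -> enorm (y - c) < r -> enorm (f y - f c) < eps).
  have [Kc|] := pselect (K c); last by exists 1.
  by have [r r01 rP] := within_continuous_enorm Kc eps_gt0; exists r.
have [rad radP] := choice radius.
(* [ball] on column vectors is the ball of the max norm. *)
pose rho c := rad c / n.+1%:R.
have ball_sub c : K c -> ball c (rho c) `<=` eball c (rad c).
  move=> Kc y [_ cy]; have [/andP[rad_gt0 _] _] := radP c Kc.
  apply: enorm_lt_entrywise => // i; rewrite !mxE distrC; exact: (cy i 0).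
have [D DK K_D] : finite_subset_cover K (fun c => ball c (rho c)) K.
  move: K_compact; rewrite compact_cover; apply => [c _ | c Kc]; first exact: ball_open.
  have [/andP[rad_gt0 _] _] := radP c Kc.
  by exists c => //; apply: ballxx; rewrite divr_gt0.
pose s := finmap.enum_fset D.
have sK (i : 'I_(size s)) : K (nth 0 s i).
  by have /DK := mem_nth 0 (ltn_ord i); rewrite inE.
exists (size s), (fun i => nth 0 s i), (fun i => rad (nth 0 s i)).
split; [exact: sK | split; [|split]].
- by move=> i; case: (radP _ (sK i)).
- move=> x /K_D[c /= cD cx]; have c_s : (index c s < size s)%N by rewrite index_mem.
  exists (Ordinal c_s) => //=; rewrite nth_index //; apply: ball_sub => //.
  by move: (DK c cD); rewrite inE.
- move=> i _ [y [iy Ky] <-]; rewrite /eball /=.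
  by case: (radP _ (sK i)) => _; apply.
Qed.

Lemma Ncover_admissible eps : compact K -> 0 < eps ->
  admissible_cover f K eps (Ncover f K eps).
Proof.
move=> K_compact eps_gt0; rewrite /Ncover; case: pselect => [ex|]; last first.
  have [N NP] := admissible_cover_exists K_compact eps_gt0.
  by case; exists N; apply/asboolP.
by case: ex_minnP => N /asboolP.
Qed.

End Covers.

Lemma fin_strict_ub (R : realType) (T : finType) (g : T -> R) :
  exists2 H, 0 < H & forall t, g t < H.
Proof.
exists (1 + \sum_t `|g t|) => [|t]; first by rewrite ltr_pwDl ?sumr_ge0.
have gt_le_norm : g t <= `|g t| by rewrite real_ler_norm ?num_real.
have norm_le_sum : `|g t| <= \sum_t' `|g t'|.
  by rewrite (bigD1 t) //= lerDl sumr_ge0.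
lra.
Qed.

Theorem theorem5 (R : realType) (n m : nat) (K : set 'cV[R]_n)
  (f : 'cV[R]_n -> 'cV[R]_m) :
  compact K -> {within K, continuous f} ->
  forall eps : R, 0 < eps ->
  exists net : rnet R n m,
    [/\ depth net = (Ncover f K eps).+1,
        hidden_widths net = nseq (Ncover f K eps) (maxn n m).+1 &
        forall x, K x -> enorm (feedforward net x - f x) < eps].
Proof.
move=> K_compact f_cont eps eps_gt0; move: (Ncover_admissible f_cont K_compact eps_gt0).
case: (Ncover f K eps) => [|N] [c [r [_ [r01 [K_cover f_cover]]]]].
  exists (rnet_cons (0 : 'M[R]_(m, n)) 0 (@piecewise_differentiable_id R) (rnet_nil R m)).
  by split => // x /K_cover[[]].
pose ci k := c (inord k); pose ri k := r (inord k).
have ri_gt0 k : 0 < ri k by case/andP: (r01 (inord k)).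
have [H H_gt0 H_ub] := fin_strict_ub (fun ab : 'I_N.+1 * 'I_N.+1 =>
  enorm (f (c ab.1) - f (c ab.2))).
have f_dist_lt a b : enorm (f (ci a) - f (ci b)) < H := H_ub (inord a, inord b).
exists (lookup_net (maxn n m) N ci ri (f \o ci) H).
split; [exact: depth_lookup_net | exact: hidden_widths_lookup_net |].
move=> x Kx; have [i _ xi] := K_cover x Kx.
have xi' : in_ball ci ri i x by rewrite /in_ball /ci /ri inord_val.
have [j xj ->] := lookup_net_correct (leq_maxl n m) (leq_maxr n m) H_gt0 ri_gt0
  f_dist_lt (ltn_ord i : (i <= N)%N) xi'.
by rewrite enorm_distC; apply: (f_cover (inord j)); exists x.
Qed.
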